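(* Let $A\in\mathbb{R}^{n\times n}$, let $W\in\mathbb{R}^{n\times n}$ be symmetric positive definite, let $C=\mathrm{diag}(C_{11},\dots,C_{nn})$ be diagonal positive definite and $V=\mathrm{diag}(\sigma_1^2,\dots,\sigma_n^2)$ with $\sigma_j>0$. Let $\Sigma$ be the unique positive semidefinite solution of $\Sigma=A\Sigma A^T-A\Sigma C^T(C\Sigma C^T+V)^{-1}C\Sigma A^T+W$ and let $\overline\Sigma=\Sigma-\Sigma C^T(C\Sigma C^T+V)^{-1}C\Sigma=(C^TV^{-1}C+\Sigma^{-1})^{-1}$ be the a posteriori Kalman filter error covariance. Then $$n\ln\left(\frac{\sigma_u^2}{C_u^2+\sigma_u^2\lambda_n^{-1}(W)}\right)\le\ln\det\overline\Sigma\le n\ln\left(\frac{\sigma_l^2}{C_l^2}\right).$$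
   Context: $\lambda_n(\cdot)$ denotes the smallest eigenvalue. The indices $l,u$ are defined by $l=\arg\min_{1\le j\le n}C_{jj}^2/\sigma_j^2$ and $u=\arg\max_{1\le j\le n}C_{jj}^2/\sigma_j^2$, with $C_l:=C_{ll}$, $C_u:=C_{uu}$. *)

From HB Require Import structures.
From mathcomp Require Import all_boot all_order all_algebra.
From mathcomp Require Import all_classical all_reals all_analysis.
Set Implicit Arguments. Unset Strict Implicit. Unset Printing Implicit Defensive.
Import Order.TTheory GRing.Theory Num.Theory.
Local Open Scope ring_scope.

Section Defs.
Variable R : realType.

Definition psd_mx n (A : 'M[R]_n) : Prop :=
  A^T = A /\ forall x : 'cV[R]_n, 0 <= (x^T *m A *m x) ord0 ord0.

Definition pd_mx n (A : 'M[R]_n) : Prop :=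
  A^T = A /\ forall x : 'cV[R]_n, x != 0 -> 0 < (x^T *m A *m x) ord0 ord0.

Definition is_min_eigenvalue n (A : 'M[R]_n) (lam : R) : Prop :=
  eigenvalue A lam /\ forall mu, eigenvalue A mu -> lam <= mu.

Definition post_cov n (Sigma C V : 'M[R]_n) : 'M[R]_n :=
  Sigma - Sigma *m C^T *m invmx (C *m Sigma *m C^T + V) *m C *m Sigma.

Definition dare n (A W C V Sigma : 'M[R]_n) : Prop :=
  Sigma = A *m Sigma *m A^T
          - A *m Sigma *m C^T *m invmx (C *m Sigma *m C^T + V) *m C *m Sigma *m A^T
          + W.
End Defs.

From HB Require Import structures.
From mathcomp Require Import all_boot all_order all_algebra.
From mathcomp Require Import all_classical all_reals all_analysis.
From mathcomp Require Import ring lra.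
Import Order.TTheory GRing.Theory Num.Theory.
Set Implicit Arguments.
Unset Strict Implicit.
Unset Printing Implicit Defensive.
Local Open Scope ring_scope.

(* The posterior covariance is the inverse of the information matrix
   P = C^T V^-1 C + Sigma^-1.  The Riccati equation gives
   Sigma = A Sigma_post A^T + W >= W >= lambda_n(W) I, as Sigma_post is
   positive semidefinite, hence 0 <= Sigma^-1 <= lambda_n(W)^-1 I.  Since
   C^T V^-1 C is diagonal with entries C_jj^2 / sigma_j^2, P lies between
   (C_l^2 / sigma_l^2) I and (C_u^2 / sigma_u^2 + lambda_n(W)^-1) I in the
   Loewner order, so det P lies between the n-th powers of these bounds
   (induction on n through the Schur complement of the first entry). *)

Section QuadraticForm.
Variable R : realFieldType.
Implicit Types (n : nat).

Definition qform n (M : 'M[R]_n) (x : 'cV[R]_n) : R := (x^T *m M *m x) 0 0.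
Definition sqnorm n (x : 'cV[R]_n) : R := (x^T *m x) 0 0.

Lemma sqnormE n (x : 'cV[R]_n) : sqnorm x = \sum_i x i 0 ^+ 2.
Proof. by rewrite /sqnorm mxE; apply: eq_bigr => i _; rewrite mxE expr2. Qed.

Lemma sqnorm_ge0 n (x : 'cV[R]_n) : 0 <= sqnorm x.
Proof. by rewrite sqnormE sumr_ge0 // => i _; rewrite sqr_ge0. Qed.

Lemma sqnorm_eq0 n (x : 'cV[R]_n) : (sqnorm x == 0) = (x == 0).
Proof.
apply/idP/eqP => [|->]; last by rewrite /sqnorm mulmx0 mxE.
rewrite sqnormE psumr_eq0 => [/allP x0|i _]; last exact: sqr_ge0.
apply/matrixP => i j; rewrite (ord1 j) mxE.
by apply/eqP; rewrite -sqrf_eq0; apply: x0; rewrite mem_index_enum.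
Qed.

Lemma sqnorm_gt0 n (x : 'cV[R]_n) : (0 < sqnorm x) = (x != 0).
Proof. by rewrite lt_def sqnorm_eq0 sqnorm_ge0 andbT. Qed.

Lemma qform0 n (M : 'M[R]_n) : qform M 0 = 0.
Proof. by rewrite /qform mulmx0 mxE. Qed.

Lemma qformD n (M N : 'M[R]_n) x : qform (M + N) x = qform M x + qform N x.
Proof. by rewrite /qform mulmxDr mulmxDl mxE. Qed.

Lemma qformB n (M N : 'M[R]_n) x : qform (M - N) x = qform M x - qform N x.
Proof. by rewrite /qform mulmxBr mulmxBl mxE !mxE. Qed.

Lemma qform_scalar n (a : R) (x : 'cV[R]_n) : qform a%:M x = a * sqnorm x.
Proof. by rewrite /qform mul_mx_scalar -scalemxAl mxE. Qed.

Lemma qformZ n (M : 'M[R]_n) t x : qform M (t *: x) = t ^+ 2 * qform M x.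
Proof.
rewrite /qform; have -> : (t *: x)^T = t *: x^T by rewrite linearZ.
by rewrite -!scalemxAl -scalemxAr scalerA mxE expr2.
Qed.

Lemma sqnorm_qform n (x : 'cV[R]_n) : sqnorm x = qform 1%:M x.
Proof. by rewrite qform_scalar mul1r. Qed.

Lemma qform_diag n (d : 'rV[R]_n) x :
  qform (diag_mx d) x = \sum_j d 0 j * x j 0 ^+ 2.
Proof.
rewrite /qform mul_mx_diag mxE; apply: eq_bigr => j _; rewrite !mxE expr2; ring.
Qed.

Lemma qform_diag_ge n (d : 'rV[R]_n) a x :
  (forall j, a <= d 0 j) -> a * sqnorm x <= qform (diag_mx d) x.
Proof.
move=> a_le; rewrite qform_diag sqnormE mulr_sumr; apply: ler_sum => j _.
by rewrite ler_wpM2r ?sqr_ge0.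
Qed.

Lemma qform_diag_le n (d : 'rV[R]_n) b x :
  (forall j, d 0 j <= b) -> qform (diag_mx d) x <= b * sqnorm x.
Proof.
move=> le_b; rewrite qform_diag sqnormE mulr_sumr; apply: ler_sum => j _.
by rewrite ler_wpM2r ?sqr_ge0.
Qed.

Lemma qform_conj n (B M : 'M[R]_n) x :
  qform (B *m M *m B^T) x = qform M (B^T *m x).
Proof. by rewrite /qform trmx_mul trmxK !mulmxA. Qed.

Lemma bilin_sym n (M : 'M[R]_n) (x y : 'cV[R]_n) : M^T = M ->
  (x^T *m M *m y) 0 0 = (y^T *m M *m x) 0 0.
Proof.
have tr11 (A : 'M[R]_1) : A^T 0 0 = A 0 0 by rewrite mxE.
by move=> sM; rewrite -tr11 !trmx_mul trmxK sM mulmxA.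
Qed.

Lemma cV_dotC n (u v : 'cV[R]_n) : (u^T *m v) 0 0 = (v^T *m u) 0 0.
Proof. by rewrite -[u^T *m v]trmxK trmx_mul trmxK mxE. Qed.

Lemma qformDZ n (M : 'M[R]_n) (x y : 'cV[R]_n) t : M^T = M ->
  qform M (x + t *: y) =
  qform M x + 2 * t * (y^T *m M *m x) 0 0 + t ^+ 2 * qform M y.
Proof.
move=> sM; rewrite /qform.
have -> : (x + t *: y)^T = x^T + t *: y^T by rewrite linearD linearZ.
rewrite !mulmxDl !mulmxDr.
have xMy := bilin_sym x y sM.
rewrite -!scalemxAl -!scalemxAr !mxE in xMy *; rewrite xMy; ring.
Qed.

Lemma psd_qform_eq0 n (M : 'M[R]_n) v : M^T = M ->
  (forall x, 0 <= qform M x) -> qform M v = 0 -> M *m v = 0.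
Proof.
move=> sM M_ge0 Mv0; apply/eqP; rewrite -sqnorm_eq0; set w := M *m v.
have q_ge0 := M_ge0 w; set q := qform M w in q_ge0 *.
set p := sqnorm w; set t := p / (q + 1).
have := M_ge0 (v + (- t) *: w); rewrite qformDZ // Mv0 -mulmxA add0r -/p.
(* the form at v - t w, with t = p / (q + 1), is negative unless p = 0 *)
have -> : 2 * - t * p + (- t) ^+ 2 * q = - (p ^+ 2 * ((q + 2) / (q + 1) ^+ 2)).
  by rewrite /t; field; rewrite lt0r_neq0 // ltr_wpDl.
rewrite oppr_ge0 pmulr_lle0 ?divr_gt0 ?exprn_gt0 ?ltr_wpDl //.
by rewrite -sqrf_eq0 eq_le sqr_ge0 andbT.
Qed.

Lemma pd_unitmx n (M : 'M[R]_n) :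
  (forall x, x != 0 -> 0 < qform M x) -> M \in unitmx.
Proof.
move=> M_gt0; rewrite unitmxE unitfE; apply/negP => /det0P [v v0 vM0].
have vT0 : v^T != 0 by rewrite trmx_eq0.
by have := M_gt0 _ vT0; rewrite /qform trmxK vM0 mul0mx mxE ltxx.
Qed.

End QuadraticForm.

Lemma invmx_diag (F : fieldType) n (d : 'rV[F]_n) :
  (forall j, d 0 j != 0) -> invmx (diag_mx d) = diag_mx (\row_j (d 0 j)^-1).
Proof.
move=> d_neq0; set e := \row_j _.
have de : diag_mx d *m diag_mx e = 1%:M.
  rewrite mulmx_diag -diag_const_mx; congr diag_mx.
  by apply/rowP => j; rewrite !mxE mulfV.
have [d_unit _] := mulmx1_unit de.
by rewrite -[invmx _]mulmx1 -de mulmxA mulVmx // mul1mx.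
Qed.

Lemma diag_gram (F : fieldType) n (C : 'M[F]_n) (v : 'rV[F]_n) :
  is_diag_mx C -> (forall j, v 0 j != 0) ->
  C^T *m invmx (diag_mx v) *m C = diag_mx (\row_j (C j j ^+ 2 / v 0 j)).
Proof.
move=> /diag_mxP[c ->] v_neq0; rewrite invmx_diag // tr_diag_mx !mulmx_diag.
by congr diag_mx; apply/rowP => j; rewrite !mxE eqxx mulr1n mulrAC expr2.
Qed.

Lemma diag_pd (R : realType) n (d : 'rV[R]_n) :
  (forall j, 0 < d 0 j) -> pd_mx (diag_mx d).
Proof.
move=> d_gt0; split=> [|x x0]; first exact: tr_diag_mx.
have /existsP[j xj] : [exists j, x j 0 != 0].
  apply: contraNT x0; rewrite negb_exists => /forallP x0.
  by apply/eqP/matrixP => i k; rewrite (ord1 k) mxE; apply/eqP/negPn.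
rewrite -/(qform _ x) qform_diag (bigD1 j) //= ltr_pwDl ?sumr_ge0 //.
  by rewrite mulr_gt0 // lt_def sqr_ge0 sqrf_eq0 xj.
by move=> k _; rewrite mulr_ge0 ?sqr_ge0 ?ltW.
Qed.

Section LoewnerDeterminant.
Variable R : realFieldType.
Implicit Types (n : nat) (m M : R).

Definition loewner_between m M n (P : 'M[R]_n) :=
  [/\ P^T = P, forall x, m * sqnorm x <= qform P x
              & forall x, qform P x <= M * sqnorm x].

Lemma qform_block n (a : R) (b : 'cV[R]_n) Q t y :
  qform (block_mx a%:M b^T b Q : 'M[R]_(1 + n)) (col_mx t%:M y) =
  a * t ^+ 2 + 2 * t * (b^T *m y) 0 0 + qform Q y.
Proof.
rewrite /qform tr_col_mx mul_row_block mul_row_col tr_scalar_mx.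
rewrite !mulmxDl !mul_mx_scalar !mul_scalar_mx -scalemxAl !mxE.
have -> : \sum_j y^T 0 j * b j 0 = \sum_j b^T 0 j * y j 0.
  by apply: eq_bigr => j _; rewrite !mxE mulrC.
rewrite eqxx /=; ring.
Qed.

Lemma sqnorm_col n t (y : 'cV[R]_n) :
  sqnorm (col_mx t%:M y : 'cV[R]_(1 + n)) = t ^+ 2 + sqnorm y.
Proof.
rewrite /sqnorm tr_col_mx mul_row_col tr_scalar_mx mul_scalar_mx.
by rewrite !mxE mulr1n expr2.
Qed.

Lemma loewner_between_schur n m M (P : 'M[R]_(1 + n)) :
  0 < m -> loewner_between m M P ->
  exists a (S : 'M[R]_n),
    [/\ m <= a <= M, loewner_between m M S & \det P = a * \det S].
Proof.
rewrite -[P]submxK; set a := ulsubmx P 0 0.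
set b := dlsubmx P; set Q := drsubmx P.
rewrite [ulsubmx P]mx11_scalar -/a => m_gt0 [+ Plo Phi].
rewrite tr_block_mx => /eq_block_mx[_ bT _ QT]; rewrite -bT in Plo Phi *.
move: a b Q bT QT Plo Phi => a b Q _ QT Plo Phi.
have amM : m <= a <= M.
  have := Plo (col_mx 1%:M 0); have := Phi (col_mx 1%:M 0).
  rewrite qform_block sqnorm_col qform0 mulmx0 mxE.
  by rewrite /sqnorm trmx0 mul0mx mxE expr1n !mulr0 !addr0 !mulr1 => -> ->.
have a_gt0 : 0 < a by case/andP: amM => + _; apply: lt_le_trans.
pose S := Q - a^-1 *: (b *m b^T).
have qS y : qform S y = qform Q y - a^-1 * (b^T *m y) 0 0 ^+ 2.
  rewrite qformB; congr (_ - _); rewrite /qform -scalemxAr -scalemxAl mxE.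
  congr (_ * _); rewrite !mulmxA -(mulmxA (y^T *m b)) mxE big_ord1 expr2.
  by rewrite cV_dotC.
exists a, S; split=> //.
- split=> [|y|y]; first by rewrite /S linearB /= linearZ /= trmx_mul trmxK QT.
    (* the lower bound at the vector (-s/a, y) that completes the square *)
    set s := (b^T *m y) 0 0.
    have := Plo (col_mx (- (s / a))%:M y).
    rewrite qform_block sqnorm_col qS -/s.
    have -> : a * (- (s / a)) ^+ 2 + 2 * - (s / a) * s + qform Q y
              = qform Q y - a^-1 * s ^+ 2 by field; rewrite gt_eqF.
    by apply: le_trans; rewrite ler_pM2l // lerDr sqr_ge0.
  have := Phi (col_mx 0%:M y); rewrite qform_block sqnorm_col qS.
  rewrite expr0n /= !mulr0 !mul0r !add0r; apply: le_trans.
  by rewrite gerBl mulr_ge0 ?invr_ge0 ?sqr_ge0 ?ltW.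
- have -> : block_mx a%:M b^T b Q =
            block_mx 1%:M 0 (a^-1 *: b) 1%:M *m block_mx a%:M b^T 0 S.
    rewrite mulmx_block !mul1mx !mul0mx ?mulmx0 !addr0 ?add0r mul_mx_scalar.
    by rewrite scalerA mulfV ?gt_eqF // scale1r -scalemxAl /S addrC subrK.
  by rewrite det_mulmx det_lblock det_ublock !det1 det_scalar1 !mul1r.
Qed.

Lemma det_loewner_between n m M (P : 'M[R]_n) :
  0 < m -> loewner_between m M P -> m ^+ n <= \det P <= M ^+ n.
Proof.
elim: n P => [|n IH] P m_gt0 PmM; first by rewrite det_mx00 !expr0 lexx.
have [a [S [/andP[ma aM] /(IH S m_gt0) /andP[mS SM] ->]]] :=
  loewner_between_schur m_gt0 PmM.
have a_ge0 : 0 <= a by apply: le_trans ma; apply: ltW.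
have mn_ge0 : 0 <= m ^+ n by rewrite exprn_ge0 ?ltW.
rewrite !exprS (ler_pM (ltW m_gt0) mn_ge0 ma mS).
by rewrite (ler_pM a_ge0 (le_trans mn_ge0 mS) aM SM).
Qed.

Lemma qform_lbound_unitmx n lam (S : 'M[R]_n) :
  0 < lam -> (forall x, lam * sqnorm x <= qform S x) -> S \in unitmx.
Proof.
move=> lam_gt0 S_ge; apply: pd_unitmx => x x0; apply: lt_le_trans (S_ge x).
by rewrite mulr_gt0 ?sqnorm_gt0.
Qed.

Lemma qform_invmx_bounds n lam (S : 'M[R]_n) : S^T = S -> 0 < lam ->
  (forall x, lam * sqnorm x <= qform S x) ->
  forall x, 0 <= qform (invmx S) x /\ qform (invmx S) x <= lam^-1 * sqnorm x.
Proof.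
move=> ST lam_gt0 S_ge x; have S_unit := qform_lbound_unitmx lam_gt0 S_ge.
set y := invmx S *m x; have xE : x = S *m y by rewrite mulKVmx.
have Si_y : qform (invmx S) x = qform S y.
  by rewrite /qform -mulmxA -/y {1}xE trmx_mul ST.
have xy : (y^T *m 1%:M *m x) 0 0 = qform S y.
  by rewrite mulmx1 {1}xE /qform -mulmxA.
(* expand |x - lam y|^2 >= 0, using y^T x = y^T S y >= lam |y|^2 *)
have := sqnorm_ge0 (x + (- lam) *: y).
rewrite sqnorm_qform qformDZ ?trmx1 // xy -!sqnorm_qform Si_y.
have := S_ge y; have := sqnorm_ge0 y.
set q := qform S y; set Y := sqnorm y; set X := sqnorm x => Y_ge0 qY h.
have lamY : lam * (lam * Y) <= lam * q by rewrite ler_pM2l.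
split; first by apply: le_trans _ qY; apply: mulr_ge0 => //; apply: ltW.
by rewrite -(ler_pM2l lam_gt0) mulVKf ?gt_eqF //; nra.
Qed.

End LoewnerDeterminant.

Section MinEigenvalue.
Import numFieldNormedType.Exports.
Local Open Scope classical_set_scope.
Variable R : realType.
Implicit Types (n : nat).

Lemma qform_trmx_continuous n (M : 'M[R]_n) :
  continuous (fun z : 'rV[R]_n => qform M z^T).
Proof.
have -> : (fun z : 'rV[R]_n => qform M z^T) =
          (fun z => \sum_j (\sum_i z 0 i * M i j) * z 0 j).
  apply/funext => z; rewrite /qform trmxK mxE.
  by apply: eq_bigr => j _; rewrite !mxE.
apply: (continuous_big add_continuous) => j _ z.
apply: continuousM; last exact: coord_continuous.
apply: (continuous_big add_continuous) => i _ {}z.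
by apply: continuousM; [exact: coord_continuous | exact: cst_continuous].
Qed.

Lemma qform_min_on_sphere n (M : 'M[R]_n) : (0 < n)%N ->
  exists2 c : 'cV[R]_n, sqnorm c = 1 &
    forall x, sqnorm x = 1 -> qform M c <= qform M x.
Proof.
move=> n_gt0; pose S := [set z : 'rV[R]_n | sqnorm z^T = 1].
have S0 : S !=set0.
  exists (delta_mx 0 (Ordinal n_gt0)).
  by rewrite /S /= /sqnorm trmxK trmx_delta mul_delta_mx mxE !eqxx.
have S_closed : closed S.
  have -> : S = (fun z => qform 1%:M z^T) @^-1` [set x | x = 1].
    by apply/seteqP; split=> z; rewrite /S /= qform_scalar mul1r.
  apply: preimage_closed; last exact: closed_eq.
  by move=> z _; apply: qform_trmx_continuous.
have S_bounded : bounded_set S.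
  exists 1; split=> [|r r_gt1 z Sz]; first exact: num_real.
  rewrite /= [leLHS]/Num.norm /= mx_normrE; apply: bigmax_le => [|[i j] _ /=].
    by rewrite ltW // (lt_trans _ r_gt1).
  apply: le_trans (ltW r_gt1); rewrite (ord1 i).
  have : z 0 j ^+ 2 <= 1.
    rewrite -Sz sqnormE (bigD1 j) //= mxE lerDl.
    by rewrite sumr_ge0 // => k _; rewrite sqr_ge0.
  by rewrite -real_normK ?num_real // expr_le1.
have [c Sc cmin] := EVT_min_rV S0 (bounded_closed_compact S_bounded S_closed)
  (continuous_subspaceT (@qform_trmx_continuous _ M)).
exists c^T; first by move: Sc; rewrite inE.
by move=> x x1; rewrite -[x]trmxK; apply: cmin; rewrite inE /S /= trmxK.
Qed.

Lemma exists_eigenvalue_le_qform n (M : 'M[R]_n) : (0 < n)%N -> M^T = M ->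
  exists2 mu, eigenvalue M mu & forall x, mu * sqnorm x <= qform M x.
Proof.
move=> n_gt0 MT; have [c c1 cmin] := qform_min_on_sphere M n_gt0.
set mu := qform M c.
have mu_le x : mu * sqnorm x <= qform M x.
  have [->|x0] := eqVneq x 0; first by rewrite qform0 /sqnorm mulmx0 mxE mulr0.
  have x_gt0 : 0 < sqnorm x by rewrite sqnorm_gt0.
  set s := Num.sqrt (sqnorm x); have s_gt0 : 0 < s by rewrite sqrtr_gt0.
  have s2 : s ^+ 2 = sqnorm x by rewrite sqr_sqrtr ?ltW.
  have s2_neq0 : s ^+ 2 != 0 by rewrite expf_neq0 ?gt_eqF.
  have := cmin (s^-1 *: x); rewrite qformZ sqnorm_qform qformZ -sqnorm_qform.
  rewrite -s2 exprVn mulVf // => /(_ erefl).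
  by rewrite -(ler_pM2l (exprn_gt0 2 s_gt0)) mulrA mulfV // mul1r mulrC.
have Mmu_psd x : 0 <= qform (M - mu%:M) x.
  by rewrite qformB qform_scalar subr_ge0.
have Mmu_sym : (M - mu%:M)^T = M - mu%:M by rewrite linearB /= tr_scalar_mx MT.
have := @psd_qform_eq0 _ _ _ c Mmu_sym Mmu_psd.
rewrite qformB qform_scalar c1 mulr1 subrr => /(_ erefl).
rewrite mulmxBl mul_scalar_mx => /eqP; rewrite subr_eq0 => /eqP Mc.
exists mu => //; apply/eigenvalueP; exists c^T.
  by rewrite -MT -trmx_mul Mc linearZ.
by rewrite trmx_eq0 -sqnorm_eq0 c1 oner_eq0.
Qed.

Lemma min_eigenvalue_le_qform n (M : 'M[R]_n) lam : M^T = M ->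
  is_min_eigenvalue M lam -> forall x, lam * sqnorm x <= qform M x.
Proof.
case: n M => [|n] M MT [_ lam_min] x.
  by rewrite /qform /sqnorm !mxE !big_ord0 mulr0.
have [mu mu_eig mu_le] := exists_eigenvalue_le_qform (ltn0Sn n) MT.
by apply: le_trans (mu_le x); rewrite ler_wpM2r ?sqnorm_ge0 ?lam_min.
Qed.

Lemma pd_eigenvalue_gt0 n (M : 'M[R]_n) lam :
  pd_mx M -> eigenvalue M lam -> 0 < lam.
Proof.
move=> [_ M_pd] /eigenvalueP[v vM v0].
have vT0 : v^T != 0 by rewrite trmx_eq0.
have := M_pd _ vT0; rewrite trmxK vM -scalemxAl mxE.
by rewrite pmulr_lgt0 // -[v in v *m _]trmxK -/(sqnorm v^T) sqnorm_gt0.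
Qed.

End MinEigenvalue.

Section PosteriorCovariance.
Variable R : realType.
Variable n : nat.
Implicit Types (A W C V Sigma : 'M[R]_n).

Lemma dare_post_cov A W C V Sigma :
  dare A W C V Sigma -> Sigma = A *m post_cov Sigma C V *m A^T + W.
Proof. by move=> {1}->; rewrite /post_cov mulmxBr mulmxBl !mulmxA. Qed.

Lemma innov_cov_unitmx C V Sigma :
  psd_mx Sigma -> pd_mx V -> C *m Sigma *m C^T + V \in unitmx.
Proof.
move=> [_ Sigma_ge0] [_ V_gt0]; apply: pd_unitmx => x x0.
by rewrite qformD qform_conj; apply: ltr_wpDl (Sigma_ge0 _) (V_gt0 _ x0).
Qed.

Lemma post_cov_qform_ge0 C V Sigma :
  psd_mx Sigma -> pd_mx V -> forall x, 0 <= qform (post_cov Sigma C V) x.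
Proof.
move=> Sigma_psd V_pd x; have G_unit := innov_cov_unitmx C Sigma_psd V_pd.
move: Sigma_psd V_pd => [SigmaT Sigma_ge0] [_ V_gt0].
move: G_unit; set G := C *m Sigma *m C^T + V => G_unit.
set y := C *m Sigma *m x; set w := invmx G *m y.
have post_x : qform (post_cov Sigma C V) x = qform Sigma x - (w^T *m y) 0 0.
  rewrite /post_cov qformB cV_dotC; congr (_ - _).
  by rewrite /qform /w /y !trmx_mul SigmaT !mulmxA.
have Gw : qform G w = (w^T *m y) 0 0 by rewrite /qform -mulmxA /w mulKVmx.
have V_ge0 : 0 <= qform V w.
  by have [->|/V_gt0/ltW//] := eqVneq w 0; rewrite qform0.
have CSw : qform Sigma (C^T *m w) = qform G w - qform V w.
  by rewrite -qform_conj /G qformD addrK.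
have wCSx : ((C^T *m w)^T *m Sigma *m x) 0 0 = (w^T *m y) 0 0.
  by rewrite trmx_mul trmxK /y !mulmxA.
(* the Sigma-form at x - C^T w plus the V-form at w is the posterior one at x *)
have : 0 <= qform Sigma (x + (-1) *: (C^T *m w)) := Sigma_ge0 _.
rewrite qformDZ // wCSx CSw Gw post_x; lra.
Qed.

Lemma post_cov_mul_information C V Sigma :
  Sigma \in unitmx -> V \in unitmx -> C *m Sigma *m C^T + V \in unitmx ->
  post_cov Sigma C V *m (C^T *m invmx V *m C + invmx Sigma) = 1%:M.
Proof.
rewrite /post_cov; set G := C *m Sigma *m C^T + V => Sigma_unit V_unit G_unit.
set K := Sigma *m C^T *m invmx G *m C.
have KSSi : K *m Sigma *m invmx Sigma = K by rewrite -mulmxA mulmxV ?mulmx1.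
(* C Sigma C^T = G - V turns K Sigma C^T V^-1 C into Sigma C^T V^-1 C - K *)
have KSD : K *m Sigma *m (C^T *m invmx V *m C) =
          Sigma *m C^T *m invmx V *m C - K.
  have -> : K *m Sigma *m (C^T *m invmx V *m C) =
            Sigma *m C^T *m invmx G *m (C *m Sigma *m C^T) *m (invmx V *m C).
    by rewrite /K !mulmxA.
  have -> : C *m Sigma *m C^T = G - V by rewrite /G addrK.
  by rewrite mulmxBr mulmxBl mulmxKV // !mulmxA mulmxK.
rewrite mulmxBl !mulmxDr mulmxV // KSSi KSD !mulmxA.
by rewrite subrK addrC addKr.
Qed.

Lemma post_cov_det_bounds A W C V Sigma (lam m M : R) :
  psd_mx Sigma -> pd_mx V -> dare A W C V Sigma ->
  0 < lam -> (forall x, lam * sqnorm x <= qform W x) ->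
  0 < m -> (forall x, m * sqnorm x <= qform (C^T *m invmx V *m C) x) ->
  (forall x, qform (C^T *m invmx V *m C) x <= M * sqnorm x) ->
  m ^+ n <= (\det (post_cov Sigma C V))^-1 <= (M + lam^-1) ^+ n.
Proof.
move=> Sigma_psd V_pd Sigma_dare lam_gt0 W_ge m_gt0 D_ge D_le.
have Sigma_ge x : lam * sqnorm x <= qform Sigma x.
  rewrite (dare_post_cov Sigma_dare) qformD qform_conj.
  by apply: le_trans (W_ge x) _; rewrite lerDr post_cov_qform_ge0.
have Sigma_unit := qform_lbound_unitmx lam_gt0 Sigma_ge.
have Sigmai_bd := qform_invmx_bounds Sigma_psd.1 lam_gt0 Sigma_ge.
have V_unit : V \in unitmx by apply: pd_unitmx; case: V_pd.
have G_unit := innov_cov_unitmx C Sigma_psd V_pd.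
have := post_cov_mul_information Sigma_unit V_unit G_unit.
set P := _ + invmx Sigma => post_P; have [post_unit _] := mulmx1_unit post_P.
have -> : (\det (post_cov Sigma C V))^-1 = \det P.
  by rewrite -det_inv -[P](mulKmx post_unit) post_P mulmx1.
apply: (det_loewner_between m_gt0); split => [|x|x].
- by rewrite linearD /= !trmx_mul trmxK !trmx_inv Sigma_psd.1 V_pd.1 mulmxA.
- by rewrite qformD; apply: le_trans (D_ge x) _; rewrite lerDl (Sigmai_bd x).1.
- by rewrite qformD mulrDl lerD ?D_le ?(Sigmai_bd x).2.
Qed.

End PosteriorCovariance.

Lemma ln_pow_bounds (R : realType) n (a b x : R) :
  0 < a -> 0 < b -> a ^+ n <= x <= b ^+ n ->
  n%:R * ln a <= ln x <= n%:R * ln b.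
Proof.
move=> a_gt0 b_gt0 /andP[ax xb].
have x_gt0 : 0 < x := lt_le_trans (exprn_gt0 n a_gt0) ax.
by rewrite !mulr_natl -!lnXn // !ler_ln ?posrE ?ax ?xb ?exprn_gt0.
Qed.

Lemma ln_inv_pow_bounds (R : realType) n (a b x : R) :
  0 < a -> 0 < b -> a ^+ n <= x^-1 <= b ^+ n ->
  n%:R * ln b^-1 <= ln x <= n%:R * ln a^-1.
Proof.
move=> a_gt0 b_gt0 x_bounds.
have x_gt0 : 0 < x.
  by rewrite -invr_gt0; apply: lt_le_trans (andP x_bounds).1; rewrite exprn_gt0.
have /andP[lo hi] := ln_pow_bounds a_gt0 b_gt0 x_bounds.
rewrite !lnV ?posrE // in lo hi *; apply/andP; split; lra.
Qed.

Theorem theorem6 (R : realType) (n : nat) (A W C Sigma : 'M[R]_n)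
  (sig : 'I_n -> R) (lamW : R) (l u : 'I_n) :
  pd_mx W ->
  is_min_eigenvalue W lamW ->
  is_diag_mx C ->
  (forall j, 0 < C j j) ->
  (forall j, 0 < sig j) ->
  let V := diag_mx (\row_j (sig j ^+ 2)) in
  psd_mx Sigma ->
  dare A W C V Sigma ->
  (forall j, C l l ^+ 2 / sig l ^+ 2 <= C j j ^+ 2 / sig j ^+ 2) ->
  (forall j, C j j ^+ 2 / sig j ^+ 2 <= C u u ^+ 2 / sig u ^+ 2) ->
  n%:R * ln (sig u ^+ 2 / (C u u ^+ 2 + sig u ^+ 2 / lamW))
    <= ln (\det (post_cov Sigma C V))
  /\ ln (\det (post_cov Sigma C V)) <= n%:R * ln (sig l ^+ 2 / C l l ^+ 2).
Proof.
move=> W_pd W_min C_diag C_gt0 sig_gt0 V Sigma_psd Sigma_dare l_min u_max.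
have lam_gt0 := pd_eigenvalue_gt0 W_pd W_min.1.
have V_pd : pd_mx V by apply: diag_pd => j; rewrite mxE exprn_gt0.
have D_diag : C^T *m invmx V *m C = diag_mx (\row_j (C j j ^+ 2 / sig j ^+ 2)).
  rewrite diag_gram // => [|j]; last by rewrite mxE expf_neq0 ?gt_eqF.
  by congr diag_mx; apply/rowP => j; rewrite !mxE.
set m := C l l ^+ 2 / sig l ^+ 2; set M := C u u ^+ 2 / sig u ^+ 2.
have m_gt0 : 0 < m by rewrite divr_gt0 ?exprn_gt0.
have M_gt0 : 0 < M + lamW^-1.
  by rewrite ltr_wpDl ?invr_gt0 // ltW // (lt_le_trans m_gt0 (l_min u)).
have D_ge x : m * sqnorm x <= qform (C^T *m invmx V *m C) x.
  by rewrite D_diag; apply: qform_diag_ge => j; rewrite mxE.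
have D_le x : qform (C^T *m invmx V *m C) x <= M * sqnorm x.
  by rewrite D_diag; apply: qform_diag_le => j; rewrite mxE.
have -> : sig u ^+ 2 / (C u u ^+ 2 + sig u ^+ 2 / lamW) = (M + lamW^-1)^-1.
  rewrite /M; field.
  by rewrite !gt_eqF // ltr_pwDr ?mulr_ge0 ?sqr_ge0 ?ltW ?exprn_gt0.
rewrite -invf_div; apply/andP/(ln_inv_pow_bounds m_gt0 M_gt0).
exact: post_cov_det_bounds Sigma_psd V_pd Sigma_dare lam_gt0
  (min_eigenvalue_le_qform W_pd.1 W_min) m_gt0 D_ge D_le.
Qed.
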